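(* Let $S$ be a profinite semigroup, let $\operatorname{End} S$ be the monoid of continuous endomorphisms of $S$ and $\operatorname{Aut} S$ the group of continuous automorphisms of $S$, both equipped with the compact-open topology. Then $\operatorname{End} S$ (respectively, $\operatorname{Aut} S$) is compact if and only if $S$ admits a fundamental system of open fully invariant (respectively, characteristic) congruences. Moreover, if $\operatorname{End} S$ (respectively, $\operatorname{Aut} S$) is compact, then it is profinite and the compact-open topology on it coincides with the topology of pointwise convergence.
   Context: A congruence $\rho$ on $S$ is open if it is an open subset of $S\times S$. A congruence $\rho$ is fully invariant if for every continuous endomorphism $f$ of $S$, $(x,y)\in\rho$ implies $(f(x),f(y))\in\rho$; it is characteristic if this holds for every continuous automorphism $f$ of $S$. A fundamental system of open fully invariant (resp. characteristic) congruences is a family of such congruences such that every open congruence on $S$ contains a member of the family (i.e., a fundamental system of entourages for the unique uniformity of $S$, whose entourages are the neighbourhoods of the diagonal). Profinite means compact, Hausdorff and totally disconnected (as a topological monoid/group). *)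

From HB Require Import structures.
From mathcomp Require Import all_boot all_order all_algebra.
From mathcomp Require Import all_classical all_reals all_analysis.
Set Implicit Arguments. Unset Strict Implicit. Unset Printing Implicit Defensive.
Local Open Scope classical_set_scope.

Section Defs.
Context {S : topologicalType} (mul : S -> S -> S).

Definition CO := {compact-open, S -> S}.
Definition PW := {ptws S -> S}.

Definition profinite_semigroup : Prop :=
  associative mul /\ continuous (fun p : S * S => mul p.1 p.2) /\
  compact [set: S] /\ hausdorff_space S /\ totally_disconnected [set: S].

Definition is_endo (f : S -> S) : Prop :=
  continuous f /\ forall x y, f (mul x y) = mul (f x) (f y).
Definition End_set : set (S -> S) := [set f | is_endo f].
Definition Aut_set : set (S -> S) := [set f | is_endo f /\ bijective f].

Definition congruence (r : set (S * S)) : Prop :=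
  [/\ (forall x, r (x, x)),
      (forall x y, r (x, y) -> r (y, x)),
      (forall x y z, r (x, y) -> r (y, z) -> r (x, z)) &
      (forall x y x' y', r (x, y) -> r (x', y') -> r (mul x x', mul y y'))].

Definition open_congruence (r : set (S * S)) : Prop :=
  congruence r /\ open r.

Definition invariant_under (F : set (S -> S)) (r : set (S * S)) : Prop :=
  forall f, F f -> forall x y, r (x, y) -> r (f x, f y).

Definition fully_invariant := invariant_under End_set.
Definition characteristic := invariant_under Aut_set.

Definition fundamental_system (P : set (S * S) -> Prop) : Prop :=
  forall r, open_congruence r ->
    exists s, [/\ open_congruence s, P s & s `<=` r].

Definition finv (f : S -> S) : S -> S :=
  match pselect (exists g, cancel f g /\ cancel g f) with
  | left H => projT1 (cid H)
  | right _ => f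
  end.

Definition profinite_monoid (E : set (S -> S)) : Prop :=
  [/\ @compact CO E, hausdorff_space (subspace (E : set CO)),
      @totally_disconnected CO E &
      {within (E `*` E : set (CO * CO)),
         continuous (fun p : CO * CO => (p.1 \o p.2 : CO))}].

Definition profinite_group (E : set (S -> S)) : Prop :=
  profinite_monoid E /\
  {within (E : set CO), continuous (fun f : CO => (finv f : CO))}.

Definition same_topology_on (E : set (S -> S)) : Prop :=
  forall A : set (S -> S), A `<=` E ->
    ((exists U : set CO, open U /\ A = U `&` E) <->
     (exists U : set PW, open U /\ A = U `&` E)).

End Defs.

From Pilot Require Import Defs.
From HB Require Import structures.
From mathcomp Require Import all_boot all_order all_algebra.
From mathcomp Require Import all_classical all_reals all_analysis.
Set Implicit Arguments. Unset Strict Implicit. Unset Printing Implicit Defensive.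
Local Open Scope classical_set_scope.
Local Notation finv := Pilot.Defs.finv. (* not fingraph's [finv] *)

(** A compact Hausdorff totally disconnected space has a basis of clopen sets
    (its quasi-components are connected), and the syntactic congruence of a
    clopen set [K] ([x ~ y] iff [u x v \in K <-> u y v \in K] for all [u, v]
    in [S^1]) is open by compactness; so open congruences are fundamental.
    If a set [G] of endomorphisms closed under composition is compact in the
    compact-open topology, then [{(x, y) | r (f x, f y) for all f in G}] is,
    again by compactness, a [G]-invariant open congruence inside [r].
    Conversely, if [G]-invariant open congruences are fundamental then [G] is
    equicontinuous: along an ultrafilter on [G] the pointwise limit (which
    exists since [S] is compact) is a continuous endomorphism and is also the
    compact-open limit; equicontinuity likewise makes the pointwise and
    compact-open topologies agree on [G] and inversion continuous.  For
    automorphisms, the pointwise limit of the inverses inverts the limit. *)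

Section CompactHausdorff.
Context {T : topologicalType}.
Hypotheses (T_compact : compact [set: T]) (T_hausdorff : hausdorff_space T).

Lemma compact_bigcap_subset_open (P : set (set T)) (O : set T) :
  P setT -> (forall A B, P A -> P B -> P (A `&` B)) ->
  (forall A, P A -> closed A) -> open O -> \bigcap_(A in P) A `<=` O ->
  exists2 A, P A & A `<=` O.
Proof.
(* Otherwise the sets [A `\` O] generate a proper filter, and a cluster point
   of it lies in every [A] but not in [O]. *)
move=> PT PI Pc oO PO; apply: contrapT => nA.
have PmeetsCO A : P A -> A `&` ~` O !=set0.
  move=> PA; apply/set0P/eqP => AO0; apply: nA; exists A => // z Az.
  by apply: contrapT => Oz; have : (A `&` ~` O) z by []; rewrite AO0.
pose F := filter_from P (fun A => A `&` ~` O).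
have FF : ProperFilter F.
  apply: filter_from_proper; last by move=> A /PmeetsCO.
  apply: filter_from_filter; first by exists setT.
  move=> A B PA PB; exists (A `&` B); first exact: PI.
  by move=> z [[Az Bz] Oz]; split; split.
have [p [_ clp]] := T_compact FF filterT.
have AOp A : P A -> (A `&` ~` O) p.
  move=> PA; have cA : closed (A `&` ~` O).
    by apply: closedI; [exact: Pc | exact: open_closedC].
  by rewrite (closure_id (A `&` ~` O)).1 // => B nB; apply: clp => //; exists A.
have Op : O p by apply: PO => A /AOp[].
by have [_ /(_ Op)] := AOp _ PT.
Qed.

Lemma compact_separate_closed (X1 X2 : set T) :
  closed X1 -> closed X2 -> X1 `&` X2 = set0 ->
  exists U1 U2, [/\ open U1, open U2, X1 `<=` U1, X2 `<=` U2 & U1 `&` U2 = set0].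
Proof.
move=> c1 c2 X12.
have X1nX2 : set_nbhs X1 (~` X2).
  apply/set_nbhsP; exists (~` X2); split => //; first exact: closed_openC.
  by move=> z X1z X2z; have : (X1 `&` X2) z by []; rewrite X12.
have [C /set_nbhsP[C0 [oC0 X1C0 C0C]] clC] :=
  compact_normal T_hausdorff T_compact c1 X1nX2.
exists C0, (~` closure C); split => //.
- exact/closed_openC/closed_closure.
- by move=> z X2z Cz; exact: clC z Cz X2z.
- by apply/seteqP; split => // z [/C0C/subset_closure Cz nCz].
Qed.

Definition quasi_component (x : T) :=
  \bigcap_(U in [set U | clopen U /\ U x]) U.

Lemma quasi_component_subset x (X1 X2 : set T) :
  closed X1 -> closed X2 -> X1 `&` X2 = set0 ->
  quasi_component x `<=` X1 `|` X2 -> X1 x -> quasi_component x `<=` X1.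
Proof.
(* Some clopen [C] containing [x] lies in [U1 `|` U2]; then [C `&` U1] is a
   clopen set containing [x], hence containing the quasi-component. *)
move=> c1 c2 X12 QX X1x.
have [U1 [U2 [oU1 oU2 XU1 XU2 U12]]] := compact_separate_closed c1 c2 X12.
have [C [[oC clC] Cx] CU] : exists2 C, (clopen C /\ C x) & C `<=` U1 `|` U2.
  apply: compact_bigcap_subset_open.
  - by split => //; exact: clopenT.
  - by move=> A B [cA Ax] [cB Bx]; split => //; exact: clopenI.
  - by move=> A [[]].
  - exact: openU.
  - by move=> z /QX [/XU1|/XU2]; [left|right].
have CU1E : C `&` U1 = C `&` ~` U2.
  apply/seteqP; split => z [Cz Uz]; split => //.
    by move=> U2z; have : (U1 `&` U2) z by []; rewrite U12.
  by have [] := CU z Cz.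
have CU1_clopen : clopen (C `&` U1).
  split; first exact: openI.
  by rewrite CU1E; apply: closedI => //; exact: open_closedC.
move=> z Qz; have [Cz U1z] := Qz _ (conj CU1_clopen (conj Cx (XU1 x X1x))).
have [//|X2z] := QX z Qz.
have : (U1 `&` U2) z by split => //; exact: XU2.
by rewrite U12.
Qed.

Lemma quasi_component_connected x : connected (quasi_component x).
Proof.
set Q := quasi_component x.
have Qx : Q x by move=> U [].
have cQ : closed Q by apply: closed_bigI => U [[]].
move=> B [b Bb] [C oC BC] [D cD BD].
have QD_closed : closed (Q `&` D) by exact: closedI.
have QnC_closed : closed (Q `&` ~` C) by apply: closedI => //; exact: open_closedC.
have QD_QnC : (Q `&` D) `&` (Q `&` ~` C) = set0.
  apply/seteqP; split => // z [QDz [_ nCz]]; apply: nCz.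
  have : B z by rewrite BD.
  by rewrite BC => -[].
have QDC : Q `<=` (Q `&` D) `|` (Q `&` ~` C).
  move=> z Qz; have [Cz|nCz] := pselect (C z); last by right.
  by left; rewrite -BD BC.
have [Bx|nBx] := pselect (B x).
  rewrite BD; apply/seteqP; split; first by move=> z [].
  by apply: (quasi_component_subset QD_closed QnC_closed QD_QnC QDC); rewrite -BD.
have QnC : Q `<=` Q `&` ~` C.
  apply: (quasi_component_subset QnC_closed QD_closed); first by rewrite setIC.
  - by move=> z /QDC[?|?]; [right|left].
  - by split=> // Cx; apply: nBx; rewrite BC.
by have := Bb; rewrite BC => -[/QnC[_ nCb] Cb].
Qed.

Lemma compact_totally_disconnected_zero_dimensional :
  totally_disconnected [set: T] -> zero_dimensional T.
Proof.
move=> T_td x y /eqP xy; apply: contrapT => noU.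
have Qy : quasi_component x y.
  by move=> U [cU Ux]; apply: contrapT => nUy; apply: noU; exists U.
have : connected_component [set: T] x y.
  exists (quasi_component x) => //.
  by split; [move=> U [] | | exact: quasi_component_connected].
by rewrite T_td // => yx; exact: xy (esym yx).
Qed.

Lemma zero_dimensional_clopen_subset (z : T) (V : set T) :
  zero_dimensional T -> open V -> V z ->
  exists2 K, (clopen K /\ K z) & K `<=` V.
Proof.
move=> zd oV Vz.
have [K [Kz cK] KV] : filter_from [set D | D z /\ clopen D] id V.
  by apply: zero_dimensional_cvg => //; exact: open_nbhs_nbhs.
by exists K.
Qed.

End CompactHausdorff.

Lemma compact_near_clopen_preimage (T X : topologicalType) (phi : T * X -> X)
    (x : X) (K : set X) :
  compact [set: T] -> continuous phi -> clopen K ->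
  \forall y \near x, forall t, K (phi (t, y)) <-> K (phi (t, x)).
Proof.
move=> cT cphi [oK cK].
have cover := (compact_near_coveringP _).1 cT X (nbhs x)
  (fun y t => K (phi (t, y)) <-> K (phi (t, x))) _.
apply: filterS (cover _ _) => [y Ky t|t0 _]; first exact: Ky.
pose M := if pselect (K (phi (t0, x))) then K else ~` K.
have oKc : open (~` K) by exact: closed_openC.
have oM : open M by rewrite /M; case: pselect.
have Mt0 : M (phi (t0, x)) by rewrite /M; case: pselect.
have [[A B] /= [nA nB] AB] := cphi (t0, x) M (open_nbhs_nbhs (conj oM Mt0)).
exists (A, B) => // -[t y] /= [At By].
have Mty : M (phi (t, y)) by exact: (AB (t, y)).
have Mtx : M (phi (t, x)) by apply: (AB (t, x)); split => //; exact: nbhs_singleton.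
by move: Mty Mtx; rewrite /M; case: pselect.
Qed.

Section SyntacticCongruence.
Context {S : topologicalType} (mul : S -> S -> S).

(* Contexts [u _ v] range over S^1 x S^1, with [None] the empty context. *)
Definition lmul (u : option S) x := if u is Some a then mul a x else x.
Definition rmul x (v : option S) := if v is Some b then mul x b else x.

Definition syntactic (K : set S) : set (S * S) :=
  [set p | forall u v, K (lmul u (rmul p.1 v)) <-> K (lmul u (rmul p.2 v))].

Lemma syntactic_congruence K : associative mul -> congruence mul (syntactic K).
Proof.
move=> mulA; split.
- by move=> x u v.
- by move=> x y xy u v; split => /(xy u v).
- by move=> x y z xy yz u v; split => [/(xy u v)/(yz u v)|/(yz u v)/(xy u v)].
- move=> x y x' y' xy xy' u v /=.
  have rmulM a b : rmul (mul a b) v = rmul a (Some (rmul b v)).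
    by case: v => //= c; rewrite mulA.
  have lmulM a w : lmul u (rmul a (Some w)) = lmul (Some (lmul u a)) w.
    by case: u => //= c; rewrite mulA.
  rewrite !rmulM; apply: iff_trans (xy u (Some (rmul x' v))) _.
  by rewrite !lmulM; exact: xy'.
Qed.

Lemma syntactic_subset K z w : syntactic K (z, w) -> K z -> K w.
Proof. by move=> /(_ None None) []. Qed.

Lemma continuous_mul_fun {X : topologicalType} (f g : X -> S) :
  continuous (fun p : S * S => mul p.1 p.2) ->
  continuous f -> continuous g -> continuous (fun x => mul (f x) (g x)).
Proof.
move=> cmul cf cg x.
apply: (@continuous_comp _ _ _ (fun x => (f x, g x)) (fun p => mul p.1 p.2)).
  by apply: cvg_pair; [exact: cf | exact: cg].
exact: cmul.
Qed.

Lemma syntactic_nbhs K x : associative mul -> compact [set: S] ->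
  continuous (fun p : S * S => mul p.1 p.2) -> clopen K ->
  \forall y \near x, syntactic K (x, y).
Proof.
move=> mulA cS cmul cK.
have cSS : compact [set: S * S] by rewrite -setXTT; exact: compact_setX.
have c1 : continuous (fun q : (S * S) * S => q.1.1).
  by move=> q; apply: (@continuous_comp _ _ _ fst fst); exact: cvg_fst.
have c2 : continuous (fun q : (S * S) * S => q.1.2).
  by move=> q; apply: (@continuous_comp _ _ _ fst snd); [exact: cvg_fst|exact: cvg_snd].
have c3 : continuous (fun q : (S * S) * S => q.2) by move=> q; exact: cvg_snd.
have near_fiber phi := @compact_near_clopen_preimage _ _ phi x K cSS ^~ cK.
have near_uv :=
  near_fiber _ (continuous_mul_fun cmul c1 (continuous_mul_fun cmul c3 c2)).
have near_u := near_fiber _ (continuous_mul_fun cmul c1 c3).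
have near_v := near_fiber _ (continuous_mul_fun cmul c3 c2).
have near_1 := near_fiber _ c3.
near=> y => u v; apply: iff_sym.
case: u v => [a|] [b|] /=.
- exact: (near near_uv y) (a, b).
- exact: (near near_u y) (a, a).
- exact: (near near_v y) (b, b).
- exact: (near near_1 y) (x, x).
Unshelve. all: end_near.
Qed.

End SyntacticCongruence.

Section Congruence.
Context {S : topologicalType} (mul : S -> S -> S) (r : set (S * S)).
Hypothesis r_congruence : congruence mul r.

Lemma congruence_refl x : r (x, x).
Proof. by case: r_congruence => + _ _ _; apply. Qed.

Lemma congruence_sym x y : r (x, y) -> r (y, x).
Proof. by case: r_congruence => _ + _ _; apply. Qed.

Lemma congruence_trans x y z : r (x, y) -> r (y, z) -> r (x, z).
Proof. by case: r_congruence => _ _ + _; apply. Qed.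

Lemma congruence_mul x y x' y' :
  r (x, y) -> r (x', y') -> r (mul x x', mul y y').
Proof. by case: r_congruence => _ _ _; apply. Qed.

Lemma congruence_open : (forall x, \forall y \near x, r (x, y)) -> open r.
Proof.
move=> r_nbhs; rewrite openE => -[a b] rab.
exists ([set y | r (a, y)], [set y | r (b, y)]) => /=; first by split; exact: r_nbhs.
move=> [c d] /= [ac bd]; apply: congruence_trans bd.
by apply: congruence_trans rab; exact: congruence_sym.
Qed.

End Congruence.

Section OpenCongruence.
Context {S : topologicalType} (mul : S -> S -> S) (r : set (S * S)).
Hypothesis r_open : open_congruence mul r.

Lemma open_congruence_nbhs x : \forall y \near x, r (x, y).
Proof.
have [[A B] /= [nA nB] AB] : nbhs (x, x) r.
  apply: open_nbhs_nbhs; split; first exact: r_open.2.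
  exact: (congruence_refl r_open.1 x).
apply: filterS nB => y By; apply: (AB (x, y)); split => //.
exact: nbhs_singleton nA.
Qed.

Lemma open_congruence_class_open x : open [set y | r (x, y)].
Proof.
rewrite openE => y /= rxy; apply: filterS (open_congruence_nbhs y) => z ryz.
by apply: (congruence_trans r_open.1 rxy).
Qed.

Lemma open_congruence_class_closed x : closed [set y | r (x, y)].
Proof.
rewrite -[X in closed X]setCK; apply: open_closedC.
rewrite openE => y /= nrxy; apply: filterS (open_congruence_nbhs y) => z ryz rxz.
by apply/nrxy/(congruence_trans r_open.1 rxz)/(congruence_sym r_open.1).
Qed.

Lemma cvg_open_congruence_class (F : set_system S) c :
  F --> c -> F [set y | r (c, y)].
Proof.
move=> Fc; apply: Fc; apply: open_nbhs_nbhs; split.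
  exact: open_congruence_class_open.
exact: (congruence_refl r_open.1 c).
Qed.

End OpenCongruence.

Lemma open_of_subspace_nbhs (T : topologicalType) (E A : set T) : A `<=` E ->
  (forall f, A f -> exists2 B, nbhs f B & B `&` E `<=` A) ->
  exists U, open U /\ A = U `&` E.
Proof.
move=> AE AnE.
exists [set g | exists2 B, open B & B g /\ B `&` E `<=` A]; split.
  rewrite {1}openE => g [B oB [Bg BA]].
  have nB : nbhs g B by apply: open_nbhs_nbhs; split.
  by apply: filterS nB => h Bh; exists B.
apply/seteqP; split => [f Af|f [[B oB [Bf BA]] Ef]]; last exact: BA.
split; last exact: AE.
have [B nB BA] := AnE f Af.
exists B°; first exact: open_interior.
by split=> // h [/interior_subset Bh Eh]; exact: BA.
Qed.

Section CompactOpenPointwise.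
Context {S : topologicalType}.

Lemma compact_open_eval_open x (O : set S) :
  open O -> open ([set g | O (g x)] : set (@CO S)).
Proof.
move=> oO; have := compact_open_open (@compact_set1 S x) oO.
suff -> : [set g | g @` [set x] `<=` O] = [set g : @CO S | O (g x)] by [].
apply/seteqP; split => g /=; first by apply; exists x.
by move=> Ogx _ [y -> <-].
Qed.

Lemma compact_open_eval_nbhs (f : S -> S) x (O : set S) : open O -> O (f x) ->
  nbhs (f : @CO S) [set g | O (g x)].
Proof.
by move=> oO Ofx; apply: open_nbhs_nbhs; split => //; exact: compact_open_eval_open.
Qed.

Lemma ptws_cvgP (F : set_system (S -> S)) (f : S -> S) : Filter F ->
  F --> (f : @PW S) <-> forall x, (fun h => h x) @ F --> f x.
Proof.
move=> FF; rewrite /PW (@cvg_sup _ _ _ F f FF).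
have eval_surj x : (fun h : S -> S => h x) @` setT = setT.
  by apply/seteqP; split => // y _; exists (fun _ => y).
split => Fx x.
  move: (Fx x); rewrite (@cvg_image _ _ (fun h : S -> S => h x) F f FF (eval_surj x)).
  move=> Fxx W nW; have [A FA AW] := Fxx W nW.
  suff : F [set h | W (h x)] by [].
  by apply: filterS FA => h Ah; rewrite -AW; exists h.
rewrite (@cvg_image _ _ (fun h : S -> S => h x) F f FF (eval_surj x)).
move=> W nW; exists [set h | W (h x)]; first exact: Fx.
by apply/seteqP; split => [_ [h Wh <-]//|y Wy]; exists (fun _ => y).
Qed.

Lemma compact_open_ptws_cvg (f : S -> S) :
  (nbhs (f : @CO S) : set_system (S -> S)) --> (f : @PW S).
Proof.
apply/ptws_cvgP => x W nW.
apply: filterS (compact_open_eval_nbhs (@open_interior _ W) nW) => h.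
exact: interior_subset.
Qed.

Lemma fun_neq_point (f g : S -> S) : f <> g -> exists x, f x != g x.
Proof.
move=> fg; apply: contrapT => fxgx; apply: fg; apply: funext => x.
by apply/eqP; apply: contrapT => fgx; apply: fxgx; exists x; exact/negP.
Qed.

Lemma compact_open_subspace_hausdorff (G : set (S -> S)) :
  hausdorff_space S -> hausdorff_space (subspace (G : set (@CO S))).
Proof.
rewrite !open_hausdorff => S_hausdorff f g /eqP /fun_neq_point [x fgx].
have [[V W] /= [fV gW] [oV oW /eqP VW]] := S_hausdorff _ _ fgx.
rewrite !inE in fV gW.
exists ([set h | V (h x)], [set h | W (h x)]) => /=; first by rewrite !inE.
split; [exact/open_subspaceW/compact_open_eval_open
       |exact/open_subspaceW/compact_open_eval_open|].
apply/eqP/seteqP; split => h // [Vh Wh].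
by have : (V `&` W) (h x) by []; rewrite VW.
Qed.

Lemma compact_open_totally_disconnected (G : set (S -> S)) :
  zero_dimensional S -> @totally_disconnected (@CO S) G.
Proof.
move=> S_zd f Gf; apply/seteqP; split; last first.
  by move=> _ ->; exact: connected_component_refl.
move=> g [C [Cf CG cnC] Cg]; apply: contrapT => /nesym /fun_neq_point [x fgx].
have [K [[oK cK] Kf nKg]] := S_zd _ _ fgx.
pose W := [set h : @CO S | K (h x)].
have W_closed : closed W.
  have -> : W = ~` [set h : @CO S | (~` K) (h x)].
    by apply/seteqP; split => h /=; [move=> Kh nKh | move=> nn; apply: contrapT].
  by apply/open_closedC/compact_open_eval_open/closed_openC.
have CW : C `&` W = C.
  apply: cnC; first by exists f.
  - by exists W => //; exact: compact_open_eval_open.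
  - by exists W.
by have [] : (C `&` W) g by rewrite CW.
Qed.

End CompactOpenPointwise.

Section EndomorphismSets.
Context {S : topologicalType} (mul : S -> S -> S).

Lemma End_set_id : End_set mul id.
Proof. by split => // x; exact: cvg_id. Qed.

Lemma End_set_comp f g : End_set mul f -> End_set mul g -> End_set mul (f \o g).
Proof.
move=> [cf fM] [cg gM]; split; last by move=> x y /=; rewrite gM fM.
by move=> x; apply: continuous_comp; [exact: cg | exact: cf].
Qed.

Lemma Aut_set_id : Aut_set mul id.
Proof. by split; [exact: End_set_id | exists id]. Qed.

Lemma Aut_set_comp f g : Aut_set mul f -> Aut_set mul g -> Aut_set mul (f \o g).
Proof.
by move=> [Ef bf] [Eg bg]; split; [exact: End_set_comp | exact: bij_comp].
Qed.

Lemma Aut_subset_End : Aut_set mul `<=` End_set mul.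
Proof. by move=> f []. Qed.

Lemma finvK (f : S -> S) : bijective f -> cancel f (finv f) /\ cancel (finv f) f.
Proof.
move=> bf; rewrite /finv; case: pselect => [H|nH]; first by case: cid => h [].
by exfalso; apply: nH; case: bf => h fh hf; exists h.
Qed.

Definition invariant_core (G : set (S -> S)) (r : set (S * S)) : set (S * S) :=
  [set p | forall f, G f -> r (f p.1, f p.2)].

Lemma invariant_core_congruence G r : G `<=` End_set mul ->
  congruence mul r -> congruence mul (invariant_core G r).
Proof.
move=> GE cr; split.
- by move=> x f _; exact: (congruence_refl cr (f x)).
- by move=> x y xy f Gf; exact: (congruence_sym cr (xy f Gf)).
- by move=> x y z xy yz f Gf; exact: (congruence_trans cr (xy f Gf) (yz f Gf)).
- move=> x y x' y' xy xy' f Gf /=; have [_ fM] := GE f Gf.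
  by rewrite !fM; exact: (congruence_mul cr (xy f Gf) (xy' f Gf)).
Qed.

Lemma invariant_core_invariant G r :
  (forall f g, G f -> G g -> G (f \o g)) -> invariant_under G (invariant_core G r).
Proof. by move=> Gcomp h Gh x y xy f Gf; exact: xy (f \o h) (Gcomp _ _ Gf Gh). Qed.

End EndomorphismSets.

Lemma compact_ultra_cvg (T : topologicalType) (X : Type) (U : set_system X)
    (phi : X -> T) :
  compact [set: T] -> UltraFilter U -> exists c : T, phi @ U --> c.
Proof.
move=> cT UU; have [c [_ clc]] := cT (phi @ U) _ filterT.
exists c => W nW; have [//|UnW] := in_ultra_setVsetC (phi @^-1` W) UU.
by have [w [nWw Ww]] := clc (~` W) W UnW nW.
Qed.

Section ProfiniteSemigroup.
Context {S : topologicalType} (mul : S -> S -> S).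
Hypothesis S_profinite : profinite_semigroup mul.

Let mulA : associative mul := S_profinite.1.
Let mul_continuous : continuous (fun p : S * S => mul p.1 p.2) := S_profinite.2.1.
Let S_compact : compact [set: S] := S_profinite.2.2.1.
Let S_hausdorff : hausdorff_space S := S_profinite.2.2.2.1.
Let S_zero_dimensional : zero_dimensional S :=
  compact_totally_disconnected_zero_dimensional S_compact S_hausdorff
    S_profinite.2.2.2.2.

Lemma open_congruence_class_subset z (V : set S) : open V -> V z ->
  exists2 r, open_congruence mul r & forall w, r (z, w) -> V w.
Proof.
move=> oV Vz.
have [K [cK Kz] KV] :=
  zero_dimensional_clopen_subset S_compact S_hausdorff S_zero_dimensional oV Vz.
have K_congruence : congruence mul (syntactic mul K) := syntactic_congruence K mulA.
exists (syntactic mul K); last by move=> w /syntactic_subset/(_ Kz)/KV.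
split => //; apply: (congruence_open K_congruence) => x.
exact: syntactic_nbhs.
Qed.

Lemma open_congruences_separate a b :
  (forall r, open_congruence mul r -> r (a, b)) -> a = b.
Proof.
move=> rab; apply: contrapT => /eqP ab.
have [A [oA aA bA]] := hausdorff_accessible S_hausdorff ab.
rewrite inE in aA; rewrite inE in bA.
have [r r_open rA] := open_congruence_class_subset oA aA.
by apply/bA/rA; exact: rab.
Qed.

Section FundamentalSystem.
Variable P : set (S * S) -> Prop.
Hypothesis P_fundamental : fundamental_system mul P.

Lemma fundamental_class_subset z (V : set S) : open V -> V z ->
  exists s, [/\ open_congruence mul s, P s & forall w, s (z, w) -> V w].
Proof.
move=> oV Vz; have [r r_open rV] := open_congruence_class_subset oV Vz.
have [s [s_open Ps sr]] := P_fundamental r_open.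
by exists s; split => // w /sr; exact: rV.
Qed.

Lemma fundamental_separate a b :
  (forall s, open_congruence mul s -> P s -> s (a, b)) -> a = b.
Proof.
move=> sab; apply: open_congruences_separate => r r_open.
have [s [s_open Ps sr]] := P_fundamental r_open.
by apply: sr; exact: sab.
Qed.

End FundamentalSystem.

Lemma invariant_core_open (G : set (S -> S)) r : @compact (@CO S) G ->
  G `<=` End_set mul -> open_congruence mul r -> open (invariant_core G r).
Proof.
move=> G_compact GE r_open; have cr := r_open.1.
apply: (congruence_open (invariant_core_congruence GE cr)) => x.
have cover := (@compact_near_coveringP (@CO S) G).1 G_compact S (nbhs x)
  (fun y f => r (f x, f y)) _.
apply: filterS (cover _ _) => [y Py f Gf|f Gf]; first exact: Py.
have [cf _] := GE f Gf.
pose C := f @^-1` [set w | r (f x, w)].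
have C_open : open C.
  apply: open_comp => [z _|]; first exact: cf.
  exact: (open_congruence_class_open r_open (f x)).
have C_compact : compact C.
  apply: subclosed_compact S_compact _ => //.
  apply: (continuous_closedP f).1 => //.
  exact: (@open_congruence_class_closed _ _ _ r_open (f x)).
exists ([set f' : @CO S | f' @` C `<=` [set w | r (f x, w)]], C) => /=.
  split; last exact: open_nbhs_nbhs (conj C_open (congruence_refl cr (f x))).
  apply: open_nbhs_nbhs; split.
    exact: compact_open_open (open_congruence_class_open r_open (f x)).
  by move=> _ [z Cz <-].
move=> [f' y] /= [f'C Cy].
have rx : r (f x, f' x).
  by apply: f'C; exists x => //; exact: (congruence_refl cr (f x)).
have ry : r (f x, f' y) by apply: f'C; exists y.
exact: (congruence_trans cr (congruence_sym cr rx) ry).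
Qed.

Lemma compact_fundamental_invariant (G : set (S -> S)) :
  @compact (@CO S) G -> G `<=` End_set mul -> G id ->
  (forall f g, G f -> G g -> G (f \o g)) ->
  fundamental_system mul (invariant_under G).
Proof.
move=> G_compact GE Gid Gcomp r r_open.
exists (invariant_core G r); split.
- split; last exact: invariant_core_open.
  exact: invariant_core_congruence GE r_open.1.
- exact: invariant_core_invariant.
- by move=> [x y] /(_ id Gid).
Qed.

(* Equicontinuity: an invariant open congruence controls [h] on a whole class. *)
Lemma fundamental_invariant_cvg (G : set (S -> S)) (F : set_system (S -> S))
    (g : S -> S) :
  fundamental_system mul (invariant_under G) -> Filter F -> F G ->
  (forall x, (fun h => h x) @ F --> g x) -> F --> (g : @CO S).
Proof.
move=> G_fundamental FF FG Fg.
apply: (proj2 (@compact_open_cvgP S S F g FF)) => K O K_compact oO gKO.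
have cover := (compact_near_coveringP K).1 K_compact (S -> S) F
  (fun h y => O (h y)) FF.
apply: filterS (cover _) => [h hK _ [y Ky <-]|x Kx]; first exact: hK.
have [s [s_open s_inv sO]] :=
  fundamental_class_subset G_fundamental oO (gKO _ (imageP g Kx)).
have cs := s_open.1.
exists ([set y | s (x, y)], [set h | G h /\ s (g x, h x)]) => /=.
  split; first exact: (open_congruence_nbhs s_open x).
  apply: filterI => //.
  exact: (cvg_open_congruence_class s_open (Fg x)).
move=> [y h] /= [sxy [Gh sgh]]; apply: sO.
exact: (congruence_trans cs sgh (s_inv h Gh _ _ sxy)).
Qed.

Lemma ultra_ptws_limit_End (G : set (S -> S)) (U : set_system (S -> S)) :
  fundamental_system mul (invariant_under G) -> G `<=` End_set mul ->
  UltraFilter U -> U G ->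
  exists2 g, End_set mul g & forall x, (fun h => h x) @ U --> g x.
Proof.
move=> G_fundamental GE UU UG.
have [g Ug] :=
  choice (fun x => compact_ultra_cvg (fun h : S -> S => h x) S_compact UU).
have near_g s x : open_congruence mul s -> U [set h | G h /\ s (g x, h x)].
  move=> s_open; apply: filterI => //.
  exact: (cvg_open_congruence_class s_open (Ug x)).
exists g => //; split.
- move=> x W nW.
  have [s [s_open s_inv sW]] :=
    fundamental_class_subset G_fundamental (@open_interior _ W) nW.
  have cs := s_open.1.
  apply: filterS (open_congruence_nbhs s_open x) => y sxy.
  apply: (@interior_subset _ W); apply: sW.
  have [h [[Gh sx] [_ sy]]] :=
    filter_ex (filterI (near_g s x s_open) (near_g s y s_open)).
  exact: (congruence_trans cs sx
    (congruence_trans cs (s_inv h Gh _ _ sxy) (congruence_sym cs sy))).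
- move=> x y; apply: (fundamental_separate G_fundamental) => s s_open s_inv.
  have cs := s_open.1.
  have [h [[Gh sx] [[_ sy] [_ sxy]]]] := filter_ex (filterI (near_g s x s_open)
    (filterI (near_g s y s_open) (near_g s (mul x y) s_open))).
  have [_ hM] := GE h Gh; rewrite hM in sxy.
  apply: (congruence_trans cs sxy).
  exact: (congruence_mul cs (congruence_sym cs sx) (congruence_sym cs sy)).
Qed.

(* The inverse of a continuous bijection of a compact Hausdorff space maps
   open sets to complements of images of compact sets. *)
Lemma Aut_set_finv f : Aut_set mul f -> Aut_set mul (finv f).
Proof.
move=> [[cf fM] bf]; have [fK Kf] := finvK bf.
split; last by exists f.
split; last by move=> x y; apply: (can_inj fK); rewrite fM !Kf.
apply/continuousP => A oA.
have -> : finv f @^-1` A = ~` (f @` (~` A)).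
  apply/seteqP; split => y.
    by move=> Ay [z nAz fz]; apply: nAz; rewrite -(fK z) fz.
  move=> nfy; apply: contrapT => nAy; apply: nfy.
  by exists (finv f y); rewrite ?Kf.
apply: closed_openC; apply: compact_closed => //; apply: continuous_compact.
  by apply: continuous_subspaceT => x; exact: cf.
by apply: (subclosed_compact _ S_compact) => //; exact: open_closedC.
Qed.

Lemma ultra_ptws_limit_Aut (U : set_system (S -> S)) :
  fundamental_system mul (characteristic mul) ->
  UltraFilter U -> U (Aut_set mul) ->
  exists2 g, Aut_set mul g & forall x, (fun h => h x) @ U --> g x.
Proof.
move=> char_fundamental UU UA.
have [g Eg Ug] :=
  ultra_ptws_limit_End char_fundamental (@Aut_subset_End _ mul) UU UA.
have [h Uh] :=
  choice (fun x => compact_ultra_cvg (fun f => finv f x) S_compact UU).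
have near_g s x : open_congruence mul s -> U [set f | s (g x, f x)].
  by move=> s_open; exact: (cvg_open_congruence_class s_open (Ug x)).
have near_h s x : open_congruence mul s ->
    U [set f | Aut_set mul f /\ s (h x, finv f x)].
  move=> s_open; apply: filterI => //.
  exact: (cvg_open_congruence_class s_open (Uh x)).
exists g => //; split => //; exists h => x;
  apply: (fundamental_separate char_fundamental) => s s_open s_inv;
  have cs := s_open.1.
- have [f [[Af shf] sgf]] :=
    filter_ex (filterI (near_h s (g x) s_open) (near_g s x s_open)).
  have := s_inv (finv f) (Aut_set_finv Af) _ _ sgf; rewrite (finvK Af.2).1.
  exact: (congruence_trans cs shf).
- have [f [[Af shf] sgf]] :=
    filter_ex (filterI (near_h s x s_open) (near_g s (h x) s_open)).
  have := s_inv f Af _ _ shf; rewrite (finvK Af.2).2 => sfx.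
  exact: (congruence_trans cs sgf sfx).
Qed.

Lemma compact_open_comp_continuous (G : set (S -> S)) : G `<=` End_set mul ->
  {within (G `*` G : set (@CO S * @CO S)),
     continuous (fun p : @CO S * @CO S => (p.1 \o p.2 : @CO S))}.
Proof.
move=> GE; apply/subspace_continuousP => -[f g] [/= Gf Gg].
apply: (proj2 (@compact_open_cvgP S S _ (f \o g) _)) => K O K_compact oO fgKO.
have cover := (compact_near_coveringP K).1 K_compact (@CO S * @CO S)%type
  (within (G `*` G) (nbhs ((f, g) : @CO S * @CO S)))
  (fun q y => O (q.1 (q.2 y))) _.
apply: filterS (cover _ _) => [q Pq _ [y Ky <-]|x Kx]; first exact: Pq.
have [cf _] := GE f Gf; have [cg _] := GE g Gg.
have oV : open (f @^-1` O) by apply: open_comp => // z _; exact: cf.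
have [C [[oC clC] Cgx] CV] := zero_dimensional_clopen_subset S_compact
  S_hausdorff S_zero_dimensional oV (fgKO _ (imageP _ Kx)).
pose N := g @^-1` C.
have oN : open N by apply: open_comp => // z _; exact: cg.
have cN : compact N.
  by apply: (subclosed_compact _ S_compact) => //; exact: (continuous_closedP g).1.
have cC : compact C by exact: (subclosed_compact clC S_compact).
exists (N, [set q : @CO S * @CO S | q.1 @` C `<=` O /\ q.2 @` N `<=` C]) => /=.
  split; first by apply: open_nbhs_nbhs.
  have nfg : nbhs ((f, g) : @CO S * @CO S)
      [set q : @CO S * @CO S | q.1 @` C `<=` O /\ q.2 @` N `<=` C].
    exists ([set h : @CO S | h @` C `<=` O], [set h : @CO S | h @` N `<=` C]) => /=.
      split; apply: open_nbhs_nbhs; split; try exact: compact_open_open.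
      - by move=> _ [z Cz <-]; exact: CV.
      - by move=> _ [z Nz <-].
    by move=> [a b] /= [].
  by apply: filterS nfg => q Bq _.
move=> [y q] /= [Ny [q1 q2]]; apply: q1; exists (q.2 y) => //.
by apply: q2; exists y.
Qed.

Lemma characteristic_finv_continuous :
  fundamental_system mul (characteristic mul) ->
  {within (Aut_set mul : set (@CO S)),
     continuous (fun f : @CO S => (finv f : @CO S))}.
Proof.
move=> char_fundamental; apply/subspace_continuousP => f Af.
apply: (proj2 (@compact_open_cvgP S S _ (finv f) _)) => K O K_compact oO fKO.
have cover := (compact_near_coveringP K).1 K_compact (@CO S)
  (within (Aut_set mul) (nbhs (f : @CO S))) (fun h y => O (finv h y)) _.
apply: filterS (cover _ _) => [q Pq _ [y Ky <-]|x Kx]; first exact: Pq.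
pose w := finv f x.
have [s [s_open s_inv sO]] :=
  fundamental_class_subset char_fundamental oO (fKO _ (imageP _ Kx)).
have cs := s_open.1.
exists ([set y | s (x, y)], [set h : @CO S | Aut_set mul h /\ s (x, h w)]) => /=.
  split; first exact: (open_congruence_nbhs s_open x).
  have nfw : nbhs (f : @CO S) [set h : @CO S | s (x, h w)].
    apply: (compact_open_eval_nbhs (open_congruence_class_open s_open x)).
    by rewrite /w (finvK Af.2).2; exact: (congruence_refl cs x).
  by apply: filterS nfw => h sxh Ah.
move=> [y h] /= [sxy [Ah sxh]].
have shy := congruence_trans cs (congruence_sym cs sxh) sxy.
by have := s_inv (finv h) (Aut_set_finv Ah) _ _ shy; rewrite (finvK Ah.2).1 => /sO.
Qed.

Lemma fundamental_invariant_same_topology (G : set (S -> S)) :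
  fundamental_system mul (invariant_under G) -> same_topology_on G.
Proof.
move=> G_fundamental A AG; split=> -[U [oU AU]].
- apply: (@open_of_subspace_nbhs (@PW S) G A AG) => f Af.
  have [Uf Gf] : (U `&` G) f by rewrite -AU.
  have within_cvg : within G (nbhs (f : @PW S)) --> (f : @CO S).
    apply: (fundamental_invariant_cvg G_fundamental).
    - exact: (@within_filter _ G _ (@nbhs_filter (@PW S) f)).
    - exact: (@withinT _ (nbhs (f : @PW S)) G (@nbhs_filter (@PW S) f)).
    - apply/ptws_cvgP.
        exact: (@within_filter _ G _ (@nbhs_filter (@PW S) f)).
      exact: (@cvg_within _ _ (@nbhs_filter (@PW S) f) G).
  exists [set h | G h -> U h].
    exact: within_cvg (open_nbhs_nbhs (conj oU Uf)).
  by move=> h [Uh Gh]; rewrite AU; split => //; exact: Uh.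
- apply: (@open_of_subspace_nbhs (@CO S) G A AG) => f Af.
  have [Uf Gf] : (U `&` G) f by rewrite -AU.
  exists U; first exact: compact_open_ptws_cvg (open_nbhs_nbhs (conj oU Uf)).
  by move=> h [Uh Gh]; rewrite AU.
Qed.

Lemma fundamental_invariant_compact (G : set (S -> S)) :
  fundamental_system mul (invariant_under G) ->
  (forall U, UltraFilter U -> U G ->
     exists2 g, G g & forall x, (fun h => h x) @ U --> g x) ->
  @compact (@CO S) G.
Proof.
move=> G_fundamental G_limits; rewrite compact_ultra => U UU UG.
have [g Gg Ug] := G_limits U UU UG.
by exists g; split => //; exact: (fundamental_invariant_cvg G_fundamental _ UG).
Qed.

Lemma End_compactP :
  @compact (@CO S) (End_set mul) <-> fundamental_system mul (fully_invariant mul).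
Proof.
split=> [End_compact|End_fundamental].
  apply: compact_fundamental_invariant => //; first exact: End_set_id.
  exact: End_set_comp.
apply: (fundamental_invariant_compact End_fundamental) => U UU UE.
exact: ultra_ptws_limit_End End_fundamental (fun f => id) UU UE.
Qed.

Lemma Aut_compactP :
  @compact (@CO S) (Aut_set mul) <-> fundamental_system mul (characteristic mul).
Proof.
split=> [Aut_compact|Aut_fundamental].
  apply: compact_fundamental_invariant => //.
  - exact: Aut_subset_End.
  - exact: Aut_set_id.
  - exact: Aut_set_comp.
apply: (fundamental_invariant_compact Aut_fundamental) => U UU UA.
exact: ultra_ptws_limit_Aut Aut_fundamental UU UA.
Qed.

Lemma End_profinite_monoid :
  @compact (@CO S) (End_set mul) -> profinite_monoid (End_set mul).
Proof.
move=> End_compact; split => //.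
- exact: compact_open_subspace_hausdorff.
- exact: compact_open_totally_disconnected.
- exact: compact_open_comp_continuous.
Qed.

Lemma Aut_profinite_group :
  @compact (@CO S) (Aut_set mul) -> profinite_group (Aut_set mul).
Proof.
move=> Aut_compact; split; last exact/characteristic_finv_continuous/Aut_compactP.
split => //.
- exact: compact_open_subspace_hausdorff.
- exact: compact_open_totally_disconnected.
- exact/compact_open_comp_continuous/Aut_subset_End.
Qed.

End ProfiniteSemigroup.

Theorem theorem4 (S : topologicalType) (mul : S -> S -> S) :
  profinite_semigroup mul ->
  [/\ (@compact (@CO S) (End_set mul) <->
         fundamental_system mul (fully_invariant mul)),
      (@compact (@CO S) (Aut_set mul) <->
         fundamental_system mul (characteristic mul)),
      (@compact (@CO S) (End_set mul) ->
         profinite_monoid (End_set mul) /\ same_topology_on (End_set mul)) &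
      (@compact (@CO S) (Aut_set mul) ->
         profinite_group (Aut_set mul) /\ same_topology_on (Aut_set mul))].
Proof.
move=> S_profinite; split.
- exact: End_compactP.
- exact: Aut_compactP.
- move=> End_compact; split; first exact: End_profinite_monoid.
  exact/fundamental_invariant_same_topology/End_compactP.
- move=> Aut_compact; split; first exact: Aut_profinite_group.
  exact/fundamental_invariant_same_topology/Aut_compactP.
Qed.
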